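(* Let $h \ge 2$, $N_H \ge 1$, $f \ge 0$ and $0 \le e \le f$ be integers, and consider an IBF with $h$ hash functions and $N = h N_H$ cells storing $f$ elements, whose state matrix is an $h$-tuple $(\mathbf{F}_1, \ldots, \mathbf{F}_h) \in \mathcal{S}_{N_H,f}^h$. Then the number of $h$-tuples $(\mathbf{F}_1, \ldots, \mathbf{F}_h) \in \mathcal{S}_{N_H,f}^h$ for which the extraction process extracts at least $e$ elements is at least $$\Theta(N_H, f, h, e) = \binom{f}{e} \sum_{\mathbf{b} \in \mathcal{T}_e \,:\, \xi(\mathbf{b}) \ge e} \left( \Psi(e, \mathbf{b}) \prod_{i=1}^{h} \left[ \binom{N_H}{b_i}\, b_i!\, z(N_H - b_i, f - b_i) \right] \right).$$
   Context: For integers $n, m \ge 0$, let $\mathcal{S}_{n,m}$ denote the set of all $n \times m$ binary matrices in which every column has Hamming weight exactly one (so $|\mathcal{S}_{n,m}| = n^m$; $\mathcal{S}_{n,0}$ consists of the single empty matrix, and $\mathcal{S}_{0,m} = \emptyset$ for $m \ge 1$). A binary matrix is called a stopping matrix if none of its rows has Hamming weight exactly one. Let $z(n, m)$ denote the number of matrices in $\mathcal{S}_{n,m}$ that are stopping matrices (so $z(n,0)=1$, $z(0,m)=0$ for $m\ge1$). The state matrix of an IBF with $h$ hash functions, $N = hN_H$ cells (partitioned into $h$ sub-filters of $N_H$ cells, the $i$-th hash function mapping into the $i$-th sub-filter) and $f$ inserted elements $x_1,\dots,x_f$ is the $h$-tuple $(\mathbf{F}_1,\dots,\mathbf{F}_h)$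 with $\mathbf{F}_i \in \mathcal{S}_{N_H,f}$, where $\mathbf{F}_i$ has a $1$ in row $r$, column $j$ iff the $i$-th hash function maps $x_j$ to cell $r$ of the $i$-th sub-filter; equivalently the $hN_H \times f$ matrix obtained by stacking $\mathbf{F}_1,\dots,\mathbf{F}_h$ vertically. Extraction (peeling) process: columns are removed simultaneously from all blocks; while there is some $i \in [h]$ and some row of $\mathbf{F}_i$ whose restriction to the not-yet-removed columns has Hamming weight exactly one, remove (extract) the column containing that unique $1$; stop when no block has a row of weight one on the remaining columns. The number of extracted elements is the number of removed columns (independent of the order of removals). For $e \in \mathbb{N}$, $\mathcal{T}_e$ is the set of vectors $\mathbf{b} = (b_1, \ldots, b_h) \in \mathbb{N}^h$ with all entries in $\{0, 1, \ldots, e\}$, and $\xi(\mathbf{b}) = \sum_{i=1}^h b_i$. The function $\Psi$ is defined recursively for $e \in \mathbb{N}$, $\mathbf{b} \in \mathbb{N}^h$ by $\Psi(0, \mathbf{0}) = 1$, $\Psi(0, \mathbf{b}) = 0$ for $\mathbf{b} \ne \mathbf{0}$, and for $e \ge 1$: $\Psi(e, \mathbf{b}) = \prod_{i=1}^{h} \binom{e}{b_i} - \sum_{j=0}^{e-1} \binom{e}{j} \Psi(j, \mathbf{b})$. ($\mathbb{N}$ includes $0$.) *)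

From mathcomp Require Import all_boot all_order all_algebra.
Set Implicit Arguments. Unset Strict Implicit. Unset Printing Implicit Defensive.
Import GRing.Theory Num.Theory.

(* A matrix in S_{n,m} (n x m binary, every column of weight one) is encoded
   by the function sending column j to the row holding its unique 1. *)
Definition Smat (n m : nat) := {ffun 'I_m -> 'I_n}.

Definition row_wt n m (F : Smat n m) (R : {set 'I_m}) (r : 'I_n) : nat :=
  #|[set j in R | F j == r]|.

Definition stopping n m (F : Smat n m) : bool :=
  [forall r : 'I_n, row_wt F setT r != 1%N].

Definition z (n m : nat) : nat := #|[set F : Smat n m | stopping F]|.

Definition state (h NH f : nat) := {ffun 'I_h -> Smat NH f}.

Definition extractable h NH f (Fs : state h NH f) (R : {set 'I_f}) (j : 'I_f)
  : bool :=
  (j \in R) && [exists i : 'I_h, row_wt (Fs i) R (Fs i j) == 1%N].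

(* one step of the extraction process: remove one extractable column
   (the extraction count is independent of the removal order; we fix
   the order by picking some extractable column) *)
Definition peel_step h NH f (Fs : state h NH f) (R : {set 'I_f}) : {set 'I_f} :=
  match [pick j | extractable Fs R j] with
  | Some j => R :\ j
  | None => R
  end.

(* remaining columns after the process stops (at most f removals) *)
Definition remaining h NH f (Fs : state h NH f) : {set 'I_f} :=
  iter f (peel_step Fs) setT.

Definition extracted h NH f (Fs : state h NH f) : nat :=
  (f - #|remaining Fs|)%N.

(* Psi(e, b): psis e b = [:: Psi(0,b); ...; Psi(e,b)] *)
Fixpoint psis (h : nat) (e : nat) (b : 'I_h -> nat) : seq int :=
  match e with
  | 0 => [:: (if [forall i, b i == 0%N] then 1 else 0)%R]
  | e'.+1 =>
      let s := psis e' b in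
      rcons s ((\prod_(i < h) ('C(e'.+1, b i))%:Z)
               - \sum_(j < e'.+1) ('C(e'.+1, j))%:Z * nth 0 s j)%R
  end.

Definition Psi (h : nat) (e : nat) (b : 'I_h -> nat) : int :=
  nth 0%R (psis e b) e.

(* T_e = {0..e}^h ; b : {ffun 'I_h -> 'I_e.+1} ; xi(b) = sum b_i *)
Definition xi h e (b : {ffun 'I_h -> 'I_e.+1}) : nat := \sum_(i < h) (b i : nat).

Definition Theta (NH f h e : nat) : int :=
  ('C(f, e))%:Z *
  \sum_(b : {ffun 'I_h -> 'I_e.+1} | (e <= xi b)%N)
     (Psi e (fun i => (b i : nat)) *
      \prod_(i < h) ('C(NH, b i) * (b i)`! * z (NH - b i) (f - b i))%:Z)%R.

From mathcomp Require Import all_boot all_order all_algebra.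
From mathcomp Require Import zify.
Import GRing.Theory Num.Theory.
Set Implicit Arguments. Unset Strict Implicit. Unset Printing Implicit Defensive.

(* Call a column of a block F_i a singleton if it is the only 1
   of its row, and call a column peelable if it is a singleton in some block.
   The extraction removes every peelable column (a singleton stays alone in
   its row when other columns are removed), so it suffices to count states
   with at least e peelable columns, i.e. to bound from below, for each
   e-set E, the number of states whose peelable set is exactly E.
   1. A block whose singleton set is a given b-set B is built from an
      injection of B into the N_H rows and a stopping matrix on the other
      columns and rows: there are at least C(N_H, b) b! z(N_H - b, f - b).
   2. Grouping the h-tuples (B_1, ..., B_h) with union E by their size vector
      b, the number of such tuples is covers E b, and an inclusion-exclusion
      argument shows covers E b = Psi(|E|, b) (both obey the recursion of
      Psi).  Summing over the C(f, e) sets E gives exactly Theta. *)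

Definition stopb (A R : finType) (F : {ffun A -> R}) : bool :=
  [forall r, #|[set a | F a == r]| != 1%N].

Definition nstop (A R : finType) : nat := #|[set F : {ffun A -> R} | stopb F]|.

Lemma card_set_comp_bij (T T' : finType) (g : T' -> T) (P : pred T) :
  bijective g -> #|[set x | P (g x)]| = #|[set x | P x]|.
Proof.
move=> gbij; rewrite -(on_card_preimset (onW_bij _ gbij)).
by apply: eq_card => x; rewrite !inE.
Qed.

Lemma stopb_bij (A A' R R' : finType) (g : A' -> A) (k : R -> R')
    (F : {ffun A -> R}) :
  bijective g -> bijective k -> stopb [ffun a' => k (F (g a'))] = stopb F.
Proof.
move=> gbij [k' kK k'K].
have weight r' : #|[set a' | [ffun a' => k (F (g a'))] a' == r']| =
                 #|[set a | F a == k' r']|.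
  rewrite -(card_set_comp_bij (fun a => F a == k' r') gbij).
  by apply: eq_card => a'; rewrite !inE ffunE -(can_eq kK) k'K.
apply/forallP/forallP => st r; first by have := st (k r); rewrite weight kK.
by rewrite weight.
Qed.

Lemma nstop_bij (A A' R R' : finType) (g : A' -> A) (k : R -> R') :
  bijective g -> bijective k -> nstop A R = nstop A' R'.
Proof.
move=> [g' gK g'K] [k' kK k'K].
pose Phi' (F' : {ffun A' -> R'}) : {ffun A -> R} := [ffun a => k' (F' (g' a))].
have Phi'bij : bijective Phi'.
  exists (fun F : {ffun A -> R} => [ffun a' => k (F (g a'))]) => F;
  by apply/ffunP => a; rewrite !ffunE ?gK ?kK ?g'K ?k'K.
rewrite /nstop -(card_set_comp_bij (@stopb A R) Phi'bij); apply: eq_card => F'.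
by rewrite !inE stopb_bij //; [exists g | exists k].
Qed.

Lemma nstop_z (A R : finType) : nstop A R = z #|R| #|A|.
Proof.
rewrite (@nstop_bij _ 'I_#|A| _ 'I_#|R| enum_val enum_rank).
- rewrite /z /nstop; apply: eq_card => F; rewrite !inE /stopping /row_wt.
  by apply: eq_forallb => r; congr (_ != _); apply: eq_card => j; rewrite !inE.
- by exists enum_rank; [exact: enum_valK | exact: enum_rankK].
- by exists enum_val; [exact: enum_rankK | exact: enum_valK].
Qed.

(* The columns of F that are alone in their row: exactly the columns an
   extraction can remove from this block in its first step. *)
Definition singletons (A R : finType) (F : {ffun A -> R}) : {set A} :=
  [set j | #|[set k | F k == F j]| == 1%N].

(* A function whose singleton set is exactly B is obtained by sending B
   injectively (phi) into R and the rest of A, in a stopping way (k), into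
   the values not used by phi; glue k is this function (r0 only serves to
   make the case analysis on A total). *)
Section Glue.
Variables (A R : finType) (B : {set A}) (r0 : R).
Notation sB := {x : A | x \in B}.
Notation sC := {x : A | x \in ~: B}.
Variable phi : {ffun sB -> R}.
Hypothesis phi_inj : injective phi.
Let imphi := [set phi x | x : sB].
Notation sR := {r : R | r \in ~: imphi}.

Definition glue (k : {ffun sC -> sR}) : {ffun A -> R} :=
  [ffun a => if insub a is Some x then phi x
             else if insub a is Some y then val (k y) else r0].

Lemma glue_valB k (x : sB) : glue k (val x) = phi x.
Proof. by rewrite ffunE valK. Qed.

Lemma glue_valC k (y : sC) : glue k (val y) = val (k y).
Proof. by rewrite ffunE insubN ?valK //; have := valP y; rewrite inE. Qed.

Lemma glueB k a (aB : a \in B) : glue k a = phi (Sub a aB).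
Proof. by rewrite -(glue_valB k) SubK. Qed.

Lemma glueC k a (aC : a \in ~: B) : glue k a = val (k (Sub a aC)).
Proof. by rewrite -(glue_valC k) SubK. Qed.

Lemma glue_restr k : [ffun x : sB => glue k (val x)] = phi.
Proof. by apply/ffunP => x; rewrite ffunE glue_valB. Qed.

Lemma glue_inj : injective glue.
Proof.
move=> k1 k2 /ffunP eq_k; apply/ffunP => y; apply: val_inj.
by have := eq_k (val y); rewrite !glue_valC.
Qed.

Lemma glue_imphi k a : (glue k a \in imphi) = (a \in B).
Proof.
case: (boolP (a \in B)) => [aB | aNB]; first by rewrite (glueB k aB) imset_f.
have aC : a \in ~: B by rewrite inE.
by rewrite (glueC k aC); have := valP (k (Sub a aC)); rewrite inE => /negbTE.
Qed.

(* A column of B is alone with its phi-value; a column off B shares its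
   value exactly with the columns of equal k-value, which are never exactly
   one since k is stopping. *)
Lemma singletons_glue k : stopb k -> singletons (glue k) = B.
Proof.
move=> /forallP stop_k; apply/setP => a; rewrite inE.
have sameB a' : glue k a' = glue k a -> (a' \in B) = (a \in B).
  by move=> eq_a; rewrite -!(glue_imphi k) eq_a.
case: (boolP (a \in B)) => aB.
  suff -> : [set a' | glue k a' == glue k a] = [set a] by rewrite cards1.
  apply/setP => a'; rewrite !inE; apply/eqP/eqP => [eq_a | -> //].
  have a'B : a' \in B by rewrite (sameB _ eq_a).
  by move: eq_a; rewrite (glueB k aB) (glueB k a'B) => /phi_inj/(congr1 val).
have aC : a \in ~: B by rewrite inE.
suff -> : [set a' | glue k a' == glue k a] =
          val @: [set y | k y == k (Sub a aC)].
  by rewrite card_imset; [exact/negbTE/stop_k | exact: val_inj].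
apply/setP => a'; rewrite inE; apply/eqP/imsetP => [eq_a | [y]].
  have a'C : a' \in ~: B by rewrite inE (sameB _ eq_a).
  exists (Sub a' a'C); rewrite ?SubK // inE; apply/eqP/val_inj.
  by move: eq_a; rewrite (glueC k a'C) (glueC k aC).
by rewrite inE => /eqP eq_k ->; rewrite glue_valC (glueC k aC) eq_k.
Qed.

Lemma card_extensions_ge :
  (nstop sC sR <=
   #|[set F : {ffun A -> R} |
      (singletons F == B) && ([ffun x : sB => F (val x)] == phi)]|)%N.
Proof.
rewrite /nstop -(card_imset _ glue_inj); apply/subset_leq_card/subsetP => F.
case/imsetP => k /[!inE] stop_k ->.
by rewrite singletons_glue // glue_restr !eqxx.
Qed.

End Glue.

(* Counting choices of phi (|R|^_|B| injections) and of the stopping rest. *)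
Lemma card_singletons_ge (A R : finType) (B : {set A}) (r0 : R) :
  (#|R| ^_ #|B| * z (#|R| - #|B|) (#|A| - #|B|) <=
   #|[set F : {ffun A -> R} | singletons F == B]|)%N.
Proof.
have cardB : #|{: {x : A | x \in B}}| = #|B| by rewrite card_sig.
rewrite -{1}cardB -card_inj_ffuns -sum_nat_const -sum1dep_card.
rewrite (partition_big (fun F : {ffun A -> R} =>
                         [ffun x : {x : A | x \in B} => F (val x)]) predT) //=.
rewrite big_mkcond /=; apply: leq_sum => phi _.
rewrite inE; case: injectiveP => // phi_inj.
rewrite sum1dep_card; apply: leq_trans (card_extensions_ge r0 phi_inj).
have cardC (T : finType) (S : {set T}) : #|[pred x in ~: S]| = (#|T| - #|S|)%N.
  by rewrite -(cardsC S) addKn; apply: eq_card => x; rewrite !inE.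
by rewrite nstop_z !card_sig !cardC card_imset // cardB.
Qed.

Definition peelable h NH f (Fs : state h NH f) : {set 'I_f} :=
  \bigcup_(i < h) singletons (Fs i).

Section Peeling.
Variables (h NH f : nat) (Fs : state h NH f).

(* Removing other columns keeps a singleton column alone in its row, so a
   peelable column can always be extracted while it is still present. *)
Lemma peelable_extractable (R : {set 'I_f}) j :
  j \in R -> j \in peelable Fs -> extractable Fs R j.
Proof.
move=> jR /bigcupP[i _]; rewrite inE => /cards1P[j' /setP fiber].
have fib k : (Fs i k == Fs i j) = (k == j).
  by move: (fiber k) (fiber j); rewrite !inE eqxx => -> /esym/eqP <-.
rewrite /extractable jR; apply/existsP; exists i; rewrite /row_wt.
suff -> : [set k in R | Fs i k == Fs i j] = [set j] by rewrite cards1.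
by apply/setP => k; rewrite !inE fib andb_idl // => /eqP ->.
Qed.

(* After k steps, either k columns are gone or the process has stopped, in
   which case no peelable column remains. *)
Lemma card_remaining_iter k :
  (#|iter k (peel_step Fs) setT| + minn k #|peelable Fs| <= f)%N.
Proof.
elim: k => [|k IH]; first by rewrite cardsT card_ord min0n addn0.
rewrite iterS /peel_step; set R := iter k _ _.
case: pickP => [j /andP[jR _] | stuck].
  move: IH; rewrite (cardsD1 j R) jR add1n.
  by move: #|R :\ j| #|peelable Fs| => r u; lia.
have dis : [disjoint R & peelable Fs].
  apply/pred0P => j /=; apply/negbTE/negP => /andP[jR jU].
  by have := stuck j; rewrite peelable_extractable.
have := max_card (R :|: peelable Fs).
by rewrite cardsU (disjoint_setI0 dis) cards0 subn0 card_ord; lia.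
Qed.

Lemma peelable_le_extracted : (#|peelable Fs| <= extracted Fs)%N.
Proof.
have := card_remaining_iter f; have := max_card (peelable Fs).
by rewrite card_ord /extracted /remaining; lia.
Qed.

End Peeling.

Section PsiRecursion.
Variables (h : nat) (b : 'I_h -> nat).

Lemma size_psis e : size (psis e b) = e.+1.
Proof. by elim: e => [|e IH] //=; rewrite size_rcons IH. Qed.

Lemma nth_psis e j : (j <= e)%N -> nth 0%R (psis e b) j = Psi j b.
Proof.
elim: e => [|e IH]; first by rewrite leqn0 => /eqP ->.
rewrite leq_eqVlt => /orP[/eqP -> // | lt_je].
by rewrite /= nth_rcons size_psis lt_je IH.
Qed.

Lemma Psi_rec n :
  (Psi n b + \sum_(j < n) ('C(n, j))%:Z * Psi j b =
   \prod_(i < h) ('C(n, b i))%:Z)%R.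
Proof.
case: n => [|n].
  rewrite big_ord0 addr0 /Psi /=.
  case: forallP => [b0 | /forallP/forallPn [i /negbTE bi]].
    by rewrite big1 // => i _; rewrite (eqP (b0 i)) bin0.
  by rewrite (bigD1 i) //= bin0n bi mul0r.
rewrite /Psi /= nth_rcons size_psis ltnn eqxx.
rewrite (eq_bigr (fun j : 'I_n.+1 => ('C(n.+1, j))%:Z * Psi j b)%R) ?subrK //.
by move=> j _; rewrite nth_psis // -ltnS.
Qed.

End PsiRecursion.

Definition covers h (T : finType) (E : {set T}) (b : 'I_h -> nat) : nat :=
  #|[set Bs : {ffun 'I_h -> {set T}} |
      [forall i, #|Bs i| == b i] && (\bigcup_(i < h) Bs i == E)]|.

(* Choosing B_i inside E independently, and grouping by the union. *)
Lemma prod_binomial_covers h (T : finType) (E : {set T}) (b : 'I_h -> nat) :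
  \prod_(i < h) 'C(#|E|, b i) = \sum_(U : {set T} | U \subset E) covers U b.
Proof.
pose Q (i : 'I_h) (B : {set T}) := (B \subset E) && (#|B| == b i).
transitivity (\prod_(i < h) \sum_(B | Q i B) 1)%N.
  by apply: eq_bigr => i _; rewrite sum1dep_card cards_draws.
rewrite bigA_distr_big_dep /=.
rewrite (partition_big (fun Bs : {ffun 'I_h -> {set T}} => \bigcup_(i < h) Bs i)
           (fun U => U \subset E)); last first.
  by move=> Bs /familyP QB; apply/bigcupsP => i _; case/andP: (QB i).
apply: eq_bigr => U UE; rewrite /covers -sum1dep_card.
rewrite big_mkcond [RHS]big_mkcond /=; apply: eq_bigr => Bs _; rewrite big1_eq.
congr (if _ then _ else _).
case: (\bigcup_(i < h) Bs i =P U) => [UB|]; rewrite ?andbF ?andbT //.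
apply/familyP/forallP => [QB i | sizeB i]; first by case/andP: (QB i).
rewrite unfold_in /Q sizeB andbT (subset_trans _ UE) // -UB.
exact: (bigcup_sup i).
Qed.

Lemma sum_subsets_by_card (T : finType) (E : {set T}) (F : {set T} -> nat) :
  \sum_(U : {set T} | U \subset E) F U =
  F E + \sum_(j < #|E|) \sum_(U : {set T} | (U \subset E) && (#|U| == j)) F U.
Proof.
rewrite (partition_big (fun U : {set T} => (inord #|U| : 'I_#|E|.+1)) predT) //.
rewrite big_ord_recr /= addnC; congr (_ + _).
  rewrite (big_pred1 E) // => U; apply/andP/eqP => [[UE /eqP] | ->].
    move/(congr1 val); rewrite /= inordK ?ltnS ?subset_leq_card // => eU.
    by apply/eqP; rewrite eqEcard UE eU leqnn.
  by split => //; apply/eqP/val_inj; rewrite /= inordK.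
apply: eq_bigr => j _; apply: eq_bigl => U.
case UE: (U \subset E) => //=.
by rewrite -val_eqE /= inordK // ltnS subset_leq_card.
Qed.

(* Inclusion-exclusion: covers E b = Psi(|E|, b), since both sides satisfy
   the same recursion in |E|. *)
Lemma covers_Psi h (T : finType) (E : {set T}) (b : 'I_h -> nat) :
  ((covers E b)%:Z = Psi #|E| b)%R.
Proof.
have [n leEn] := ubnP #|E|; elim: n E leEn => // n IH E ltE.
set m := #|E|.
suff rec : (\prod_(i < h) ('C(m, b i))%:Z =
            (covers E b)%:Z + \sum_(j < m) ('C(m, j))%:Z * Psi j b)%R.
  by apply/(addIr (\sum_(j < m) ('C(m, j))%:Z * Psi j b)%R); rewrite -rec Psi_rec.
rewrite -(big_morph Posz PoszM (erefl 1%:Z)%R) prod_binomial_covers.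
rewrite sum_subsets_by_card PoszD (big_morph Posz PoszD (erefl 0%:Z)%R).
congr (_ + _)%R; apply: eq_bigr => j _.
rewrite (big_morph Posz PoszD (erefl 0%:Z)%R) (eq_bigr (fun _ => Psi j b)).
  rewrite (eq_bigl (mem [set U : {set T} | (U \subset E) & (#|U| == j)])).
    by rewrite sumr_const -mulr_natl cards_draws natz.
  by move=> U /=; rewrite inE.
move=> U /andP[UE /eqP eU]; rewrite IH eU //.
exact: leq_trans (ltn_ord j) ltE.
Qed.

(* The factor of Theta attached to a block with b singleton columns. *)
Definition lb_singletons (NH f b : nat) : nat :=
  'C(NH, b) * b`! * z (NH - b) (f - b).

Lemma card_singletons_Smat (NH f : nat) (B : {set 'I_f}) : (1 <= NH)%N ->
  (lb_singletons NH f #|B| <= #|[set F : Smat NH f | singletons F == B]|)%N.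
Proof.
move=> NH1; have := card_singletons_ge B (Ordinal NH1).
by rewrite !card_ord /lb_singletons bin_ffact.
Qed.

(* A state is determined blockwise, so states with peelable set E are
   counted by the h-tuples of singleton sets whose union is E. *)
Lemma card_peelable_eq (h NH f : nat) (E : {set 'I_f}) :
  #|[set Fs : state h NH f | peelable Fs == E]| =
  \sum_(Bs : {ffun 'I_h -> {set 'I_f}} | \bigcup_(i < h) Bs i == E)
     \prod_(i < h) #|[set F : Smat NH f | singletons F == Bs i]|.
Proof.
pose sing (Fs : state h NH f) := [ffun i => singletons (Fs i)].
have peelableE Fs : \bigcup_(i < h) sing Fs i = peelable Fs.
  by apply: eq_bigr => i _; rewrite ffunE.
rewrite -sum1dep_card (partition_big sing (fun Bs => \bigcup_(i < h) Bs i == E));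
  last by move=> Fs; rewrite peelableE.
apply: eq_bigr => Bs unionE.
rewrite (eq_bigr (fun i => \sum_(F : Smat NH f | singletons F == Bs i) 1)%N);
  last by move=> i _; rewrite sum1dep_card.
rewrite bigA_distr_big_dep /=; apply: eq_big => [Fs | Fs _]; last first.
  by rewrite big1_eq.
apply/andP/familyP => [[_ /eqP <-] i | singB]; first by rewrite unfold_in ffunE.
have singE : sing Fs = Bs by apply/ffunP => i; rewrite ffunE; apply/eqP/singB.
by rewrite -peelableE singE.
Qed.

(* Grouping h-tuples of sets by their size vector b (all sizes are at most
   |E| <= e when the union is E). *)
Lemma sum_covers_tuples h (T : finType) (E : {set T}) e (w : nat -> nat) :
  (#|E| <= e)%N ->
  \sum_(b : {ffun 'I_h -> 'I_e.+1}) covers E (fun i => b i) * \prod_(i < h) w (b i)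
  = \sum_(Bs : {ffun 'I_h -> {set T}} | \bigcup_(i < h) Bs i == E)
       \prod_(i < h) w #|Bs i|.
Proof.
move=> Ee; pose size_vec (Bs : {ffun 'I_h -> {set T}}) :=
  [ffun i => inord #|Bs i| : 'I_e.+1].
rewrite (partition_big size_vec predT) //; apply: eq_bigr => b _.
rewrite /covers -sum1dep_card big_distrl /=; apply: eq_big => Bs; last first.
  by case/andP=> /forallP sizeB _; rewrite mul1n; apply: eq_bigr => i _;
     rewrite (eqP (sizeB i)).
case: eqP => [unionE | _]; rewrite ?andbF // andbT /=.
have small i : (#|Bs i| < e.+1)%N.
  by rewrite ltnS (leq_trans _ Ee) // -unionE subset_leq_card // (bigcup_sup i).
apply/forallP/eqP => [sizeB | <- i]; last by rewrite ffunE inordK.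
by apply/ffunP => i; apply: val_inj; rewrite ffunE /= inordK // (eqP (sizeB i)).
Qed.

Lemma card_peelable_ge h NH f e (E : {set 'I_f}) :
  (1 <= NH)%N -> (#|E| <= e)%N ->
  (\sum_(b : {ffun 'I_h -> 'I_e.+1} | (e <= xi b)%N)
      covers E (fun i => b i) * \prod_(i < h) lb_singletons NH f (b i)
   <= #|[set Fs : state h NH f | peelable Fs == E]|)%N.
Proof.
move=> NH1 Ee; rewrite card_peelable_eq.
apply: (@leq_trans (\sum_(b : {ffun 'I_h -> 'I_e.+1})
     covers E (fun i => b i) * \prod_(i < h) lb_singletons NH f (b i))).
  by rewrite [X in (_ <= X)%N](bigID (fun b => e <= xi b)) /= leq_addr.
rewrite sum_covers_tuples //; apply: leq_sum => Bs _.
by apply: leq_prod => i _; apply: card_singletons_Smat.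
Qed.

Lemma card_extracted_ge h NH f e :
  (\sum_(E : {set 'I_f} | #|E| == e) #|[set Fs : state h NH f | peelable Fs == E]|
   <= #|[set Fs : state h NH f | e <= extracted Fs]|)%N.
Proof.
rewrite (eq_bigr (fun E => \sum_(Fs : state h NH f |
           (#|peelable Fs| == e) && (peelable Fs == E)) 1)%N); last first.
  move=> E /eqP cardE; rewrite sum1dep_card; apply: eq_card => Fs.
  by rewrite !inE; case: (peelable Fs =P E) => [-> | _]; rewrite ?andbF ?cardE ?eqxx.
rewrite -(partition_big (@peelable h NH f) (fun E => #|E| == e)) //.
rewrite sum1dep_card; apply/subset_leq_card/subsetP => Fs.
by rewrite !inE => /eqP <-; apply: peelable_le_extracted.
Qed.

Lemma Theta_covers NH f h e :
  Theta NH f h e =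
  ((\sum_(E : {set 'I_f} | #|E| == e) \sum_(b : {ffun 'I_h -> 'I_e.+1} | (e <= xi b)%N)
      covers E (fun i => b i) * \prod_(i < h) lb_singletons NH f (b i))%N%:Z)%R.
Proof.
rewrite /Theta (big_morph Posz PoszD (erefl 0%:Z)%R).
rewrite (eq_bigr (fun _ : {set 'I_f} =>
    \sum_(b : {ffun 'I_h -> 'I_e.+1} | (e <= xi b)%N)
    (Psi e (fun i => b i) * \prod_(i < h) (lb_singletons NH f (b i))%:Z))%R).
  rewrite (eq_bigl (mem [set E : {set 'I_f} | #|E| == e])); last by move=> E; rewrite !inE.
  by rewrite sumr_const -mulr_natl natz card_draws card_ord.
move=> E /eqP cardE; rewrite (big_morph Posz PoszD (erefl 0%:Z)%R).
apply: eq_bigr => b _; rewrite PoszM -[X in Psi X _]cardE -covers_Psi.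
by rewrite (big_morph Posz PoszM (erefl 1%:Z)%R).
Qed.

Theorem lemma2 (h NH f e : nat) :
  (2 <= h)%N -> (1 <= NH)%N -> (e <= f)%N ->
  (Theta NH f h e <= (#|[set Fs : state h NH f | (e <= extracted Fs)%N]|)%:Z)%R.
Proof.
move=> _ NH1 _; rewrite Theta_covers lez_nat.
apply: leq_trans (card_extracted_ge h NH f e); apply: leq_sum => E /eqP cardE.
by apply: card_peelable_ge; rewrite ?cardE.
Qed.
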